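(* Let $G$ be a connected weighted multigraph on the vertex set $V$, $|V|\ge 2$, with positive edge weights and weighted adjacency matrix $A$. Let $i,j\in V$ be distinct. Then for every $t\in\bigl(0,(\rho(A_{jj}))^{-1}\bigr)$, the total weight $r_{ij(1)}(t)$ of all $i\to j$ hitting walks in $G(t)$ is finite and $$r_{ij(1)}(t)=\bigl(t^{-1}I-A_{jj}\bigr)^{-1}_i\,a_{\setminus j\,j}.$$
   Context: $G$ may have loops and multiple edges; $A=(a_{ij})$ has $a_{ij}$ equal to the sum of weights of the edges joining $i$ and $j$; $\rho(\cdot)$ denotes spectral radius. $G(t)$ is $G$ with all edge weights multiplied by $t$. A $v_0\to v_m$ walk is an alternating sequence of vertices and edges $v_0,e_1,v_1,\dots,e_m,v_m$ with $e_k$ joining $v_{k-1},v_k$; its weight is the product of its edge weights; a hitting $v_0\to v_m$ walk is one containing only one occurrence of $v_m$. Matrices are indexed by vertices; $A_{jj}$ is $A$ with row and column $j$ deleted (indexed by $V\setminus\{j\}$); $N^{-1}_i$ is the row of $N^{-1}$ indexed by $i$; $a_{\setminus j\,j}$ is column $j$ of $A$ with $a_{jj}$ removed. *)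

From HB Require Import structures.
From mathcomp Require Import all_boot all_order all_algebra.
From mathcomp Require Import all_classical all_reals all_analysis.
From mathcomp Require Import complex.
Unset Printing Implicit Defensive.
Import Order.TTheory GRing.Theory Num.Theory.
Local Open Scope ring_scope.

(* A finite weighted multigraph (loops and multiple edges allowed) on the
   vertex set 'I_N: a finite type E of edges, each edge e has two endpoints
   [ends e] (an unordered pair, stored as an ordered pair) and a weight [w e]. *)
Section Graph.
Variables (R : realType) (N : nat) (E : finType).
Variables (ends : E -> 'I_N * 'I_N) (w : E -> R).

Definition joins (e : E) (x y : 'I_N) : bool :=
  (ends e == (x, y)) || (ends e == (y, x)).

Definition connected_graph : Prop :=
  forall x y : 'I_N, connect (fun u v => [exists e, joins e u v]) x y.

Definition adjmx : 'M[R]_N := \matrix_(x, y) \sum_(e | joins e x y) w e.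

(* A walk of length m: vertices v_0..v_m and edges e_1..e_m
   (edge (k : 'I_m) is e_{k+1}). *)
Definition walk_t : Type :=
  {m : nat & ({ffun 'I_m.+1 -> 'I_N} * {ffun 'I_m -> E})%type}.

Definition wlen (p : walk_t) : nat := tag p.
Definition wvert (p : walk_t) : 'I_(wlen p).+1 -> 'I_N := (tagged p).1.
Definition wedge (p : walk_t) : 'I_(wlen p) -> E := (tagged p).2.

Definition is_walk (p : walk_t) : bool :=
  [forall k : 'I_(wlen p),
     joins (wedge p k) (wvert p (widen_ord (leqnSn _) k)) (wvert p (lift ord0 k))].

Definition hitting_walk (i j : 'I_N) (p : walk_t) : bool :=
  [&& is_walk p, wvert p ord0 == i, wvert p ord_max == j &
      [forall k : 'I_(wlen p).+1, (wvert p k == j) ==> (k == ord_max)]].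

(* weight of a walk in G(t) (all edge weights multiplied by t) *)
Definition walk_weight (t : R) (p : walk_t) : R :=
  \prod_(k < wlen p) (t * w (wedge p k)).

(* total weight r_{ij(1)}(t) of all hitting i -> j walks in G(t), as an
   extended real (a sum of nonnegative terms, possibly +oo) *)
Definition hitting_total (i j : 'I_N) (t : R) : \bar R :=
  (\esum_(p in [set p | hitting_walk i j p]) (walk_weight t p)%:E)%E.

End Graph.

Definition spectral_radius (R : realType) (n : nat) (M : 'M[R]_n) : R :=
  sup [set ComplexField.Normc.normc z | z in
        [set z : R[i] | root (map_poly (fun x : R => x%:C%C) (char_poly M)) z]].

From HB Require Import structures.
From mathcomp Require Import all_boot all_order all_algebra.
From mathcomp Require Import all_classical all_reals all_analysis.
From mathcomp Require Import complex.
From mathcomp Require Import ring lra zify.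

(* Deleting the edges that leave [j] makes [j] absorbing: the hitting [i -> j]
   walks of length [m] are then exactly the [i -> j] walks of length [m], so
   their total weight in [G(t)] is the [(i, j)] entry of [P^m], where [P] is
   the resulting adjacency matrix scaled by [t].  Since row [j] of [P] is zero,
   [P^(m+1)(i, j) = ((t A_jj)^m (t a))_i], and the series of these is a
   Neumann series.  As [t rho(A_jj) < 1], the resolvent [t^-1 I - A_jj] is
   invertible and [(t A_jj)^m] tends to zero (peel the linear factors of the
   characteristic polynomial off one at a time and conclude by
   Cayley-Hamilton), so the series converges to [(t^-1 I - A_jj)^-1 a]. *)

Set Implicit Arguments.
Unset Strict Implicit.
Unset Printing Implicit Defensive.

Import Order.TTheory GRing.Theory Num.Theory.
Import numFieldNormedType.Exports.
Local Open Scope ring_scope.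

Local Notation normc := ComplexField.Normc.normc.

Lemma normc_ge0 (R : rcfType) (z : R[i]) : 0 <= normc z.
Proof. by case: z => a b /=; rewrite sqrtr_ge0. Qed.

Lemma normc_real (R : rcfType) (x : R) : normc x%:C%C = `|x|.
Proof. by rewrite /= expr0n /= addr0 sqrtr_sqr. Qed.

Lemma ler_sum_seq_mem (R : numDomainType) (T : eqType) (s : seq T) (F : T -> R) y :
  (forall x, 0 <= F x) -> y \in s -> F y <= \sum_(x <- s) F x.
Proof.
move=> F0; elim: s => // x s IH; rewrite inE big_cons => /orP[/eqP->|/IH Fy].
  by rewrite lerDl sumr_ge0.
by rewrite (le_trans Fy) // lerDr.
Qed.

Section SpectralRadius.
Variables (R : realType) (n : nat) (M : 'M[R]_n).

Lemma normc_le_spectral_radius (z : R[i]) :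
  root (map_poly (fun x : R => x%:C%C) (char_poly M)) z ->
  normc z <= spectral_radius R n M.
Proof.
set p := map_poly _ _ => pz.
have [rs p_split] := closed_field_poly_normal p.
have p_neq0 : lead_coef p != 0.
  by rewrite lead_coef_eq0 -size_poly_eq0 size_map_poly size_char_poly.
have roots_in_rs y : root p y -> y \in rs.
  by rewrite p_split rootZ // root_prod_XsubC.
apply: sup_upper_bound; last by exists z.
split; first by exists (normc z); exists z.
exists (\sum_(v <- rs) normc v) => _ [y /= py <-].
by apply: ler_sum_seq_mem; [exact: normc_ge0 | exact: roots_in_rs].
Qed.

Lemma unitmx_resolvent (t : R) :
  0 < t -> t * spectral_radius R n M < 1 -> t^-1%:M - M \in unitmx.
Proof.
move=> t_gt0 t_rho.
have not_root : ~~ root (char_poly M) t^-1.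
  apply/negP => /(rmorph_root (real_complex R)) /normc_le_spectral_radius.
  rewrite normc_real ger0_norm ?invr_ge0 ?(ltW t_gt0) // => rho_ge.
  have := ler_wpM2l (ltW t_gt0) rho_ge; rewrite mulfV ?gt_eqF //.
  by move=> /(lt_le_trans t_rho); rewrite ltxx.
move: not_root; rewrite -eigenvalue_root_char /eigenvalue /eigenspace kermx_eq0.
rewrite row_free_unit negbK => unitB.
by rewrite -opprB -scaleN1r unitmxZ // unitrN1.
Qed.

End SpectralRadius.

Lemma cvg0_contraction (R : archiRealFieldType) (a b : nat -> R) (c : R) :
  (forall m, 0 <= a m) -> 0 <= c -> c < 1 ->
  (forall m, a m.+1 <= c * a m + b m) ->
  (b m @[m --> \oo] --> 0)%classic -> (a m @[m --> \oo] --> 0)%classic.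
Proof.
move=> a_ge0 c_ge0 c_lt1 a_rec /cvgrPdist_lt b_cvg0; apply/cvgrPdist_lt => e e_gt0.
have d_gt0 : 0 < e * (1 - c) / 2 by rewrite divr_gt0 // mulr_gt0 // subr_gt0.
have [N _ b_small] := b_cvg0 _ d_gt0.
(* past [N] the perturbations [b] accumulate to at most [e / 2] *)
have a_bound d : a (N + d)%N <= c ^+ d * a N + e / 2.
  elim: d => [|d IH]; first by rewrite addn0 expr0 mul1r lerDl ltW // divr_gt0.
  have bNd : b (N + d)%N <= e * (1 - c) / 2.
    have := b_small (N + d)%N (leq_addr _ _); rewrite sub0r normrN => /ltW.
    exact: le_trans (ler_norm _).
  rewrite addnS (le_trans (a_rec _)) // (le_trans (lerD (ler_wpM2l c_ge0 IH) bNd)) //.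
  rewrite mulrDr mulrA -exprS -addrA lerD2l.
  nra.
have geo_cvg0 : (geometric (a N) c m @[m --> \oo] --> 0)%classic.
  by apply: cvg_geometric; rewrite ger0_norm.
have [N' _ geo_small] :=
  (cvgrPdist_lt _ _).1 geo_cvg0 (e / 2) (divr_gt0 e_gt0 (ltr0Sn _ 1)).
exists (N + N')%N => // m /= Nm.
have -> : m = (N + (m - N))%N by lia.
rewrite sub0r normrN ger0_norm // (le_lt_trans (a_bound _)) //.
have := geo_small (m - N)%N; rewrite /= sub0r normrN /geometric /=.
move=> /(_ ltac:(lia)) /(le_lt_trans (ler_norm _)) geo_lt.
by rewrite [X in _ < X](splitr e) ltrD2r mulrC.
Qed.

Section ScaledPowerDecay.
Variables (R : realType) (n : nat) (A : 'M[R]_n.+1) (t : R) (rs : seq R[i]).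
Hypothesis t_gt0 : 0 < t.
Hypothesis char_poly_split :
  char_poly (map_mx (real_complex R) A) = \prod_(z <- rs) ('X - z%:P).
Hypothesis roots_contract : forall z, z \in rs -> t * normc z < 1.

Let Ac := map_mx (real_complex R) A.

(* [W k m = t^m q_k(A) A^m], where [q_k] is the product of the first [k]
   linear factors of the characteristic polynomial: [W 0 m = (t A)^m], and
   [W (size rs) m = 0] by Cayley-Hamilton. *)
Let W k m := (t ^+ m)%:C%C *: horner_mx Ac (\prod_(z <- take k rs) ('X - z%:P) * 'X^m).

Lemma W_size m : W (size rs) m = 0.
Proof.
by rewrite /W take_size -char_poly_split rmorphM /= Cayley_Hamilton mul0r scaler0.
Qed.

Lemma W_recS k m : (k < size rs)%N ->
  W k m.+1 = t%:C%C *: W k.+1 m + (t%:C%C * rs`_k) *: W k m.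
Proof.
move=> k_lt; rewrite /W (take_nth 0 k_lt) big_rcons /=.
set q := \prod_(_ <- _) _.
have -> : q * 'X^(m.+1) = q * ('X - (rs`_k)%:P) * 'X^m + (rs`_k) *: (q * 'X^m).
  by rewrite -mul_polyC exprS; ring.
rewrite linearD linearZ /= scalerDr !scalerA exprS rmorphM /=.
by rewrite -!mulrA [rs`_k * _]mulrC.
Qed.

Lemma W_cvg0 k x y : (k <= size rs)%N ->
  (normc (W k m x y) @[m --> \oo] --> 0)%classic.
Proof.
move=> k_le; rewrite -(subKn k_le).
elim: (size rs - k)%N (leq_subr k (size rs)) => [_|d IH d_le].
  rewrite subn0 (_ : (fun m => _) = fun=> 0); first exact: cvg_cst.
  by apply: funext => m; rewrite W_size mxE ComplexField.Normc.normc0.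
have d_lt : (size rs - d.+1 < size rs)%N by lia.
have d_succ : (size rs - d.+1).+1 = (size rs - d)%N by lia.
apply: (@cvg0_contraction _ _ (fun m => t * normc (W (size rs - d) m x y))
          (t * normc rs`_(size rs - d.+1))).
- by move=> m; exact: normc_ge0.
- by rewrite mulr_ge0 ?normc_ge0 // ltW.
- by apply: roots_contract; rewrite mem_nth.
- move=> m; rewrite W_recS // d_succ mxE addrC.
  apply: le_trans (le_normcD _ _) _.
  rewrite !mxE !ComplexField.Normc.normcM !normc_real ger0_norm ?(ltW t_gt0) //.
- by rewrite -(mulr0 t); apply: cvgMl_tmp; apply: IH; exact: ltnW.
Qed.

Lemma W0E m x y : normc (W 0 m x y) = `|t ^+ m * (A ^+ m) x y|.
Proof.
rewrite /W take0 big_nil mul1r [horner_mx _ _]rmorphXn /= horner_mx_X -rmorphXn.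
by rewrite !mxE -rmorphM normc_real.
Qed.

End ScaledPowerDecay.

Lemma cvg0_scaled_mxpow (R : realType) n (A : 'M[R]_n.+1) (t : R) :
  0 < t -> t * spectral_radius R n.+1 A < 1 ->
  forall x y, ((t ^+ m * (A ^+ m) x y) @[m --> \oo] --> 0)%classic.
Proof.
move=> t_gt0 t_rho x y.
set Ac := map_mx (real_complex R) A.
have [rs rs_split] := closed_field_poly_normal (char_poly Ac).
rewrite (monicP (char_poly_monic _)) scale1r in rs_split.
apply: norm_cvg0.
under eq_fun do rewrite -(W0E A t rs).
apply: W_cvg0 => // z z_rs.
apply: le_lt_trans t_rho; rewrite ler_wpM2l ?(ltW t_gt0) //.
by apply: normc_le_spectral_radius; rewrite map_char_poly rs_split root_prod_XsubC.
Qed.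

Section FfunSnoc.
Variable I : finType.

Definition ffun_snoc {m} (g : {ffun 'I_m -> I}) (z : I) : {ffun 'I_m.+1 -> I} :=
  [ffun k => if unlift ord_max k is Some k' then g k' else z].

Lemma ffun_snoc_lift m (g : {ffun 'I_m -> I}) z k :
  ffun_snoc g z (lift ord_max k) = g k.
Proof. by rewrite ffunE liftK. Qed.

Lemma ffun_snoc_max m (g : {ffun 'I_m -> I}) z : ffun_snoc g z ord_max = z.
Proof. by rewrite ffunE unlift_none. Qed.

Lemma sum_ffun_snoc (R : nmodType) m (F : {ffun 'I_m.+1 -> I} -> R) :
  \sum_f F f = \sum_(g : {ffun 'I_m -> I}) \sum_(z : I) F (ffun_snoc g z).
Proof.
rewrite pair_bigA /= (reindex (fun p => ffun_snoc p.1 p.2)) //.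
exists (fun f : {ffun 'I_m.+1 -> I} => ([ffun k => f (lift ord_max k)], f ord_max)).
  move=> [g z] _.
  rewrite /= ffun_snoc_max; congr (_, _).
  by apply/ffunP => k; rewrite ffunE ffun_snoc_lift.
move=> f _; apply/ffunP => k; rewrite ffunE.
by case: unliftP => [k'|] ->; rewrite ?ffunE.
Qed.

End FfunSnoc.

Definition path_prod {R : pzSemiRingType} {N m} (M : 'M[R]_N)
    (f : {ffun 'I_m.+1 -> 'I_N}) : R :=
  \prod_(k < m) M (f (widen_ord (leqnSn m) k)) (f (lift ord0 k)).

Lemma path_prod_snoc (R : comPzSemiRingType) N m (M : 'M[R]_N)
    (g : {ffun 'I_m.+1 -> 'I_N}) z :
  path_prod M (ffun_snoc g z) = path_prod M g * M (g ord_max) z.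
Proof.
rewrite /path_prod big_ord_recr /=; congr (_ * _).
  apply: eq_bigr => k _.
  have -> : widen_ord (leqnSn m.+1) (widen_ord (leqnSn m) k)
            = lift ord_max (widen_ord (leqnSn m) k).
    by apply: val_inj; rewrite [RHS]lift_max.
  have -> : lift ord0 (widen_ord (leqnSn m) k) = lift ord_max (lift ord0 k).
    by apply: val_inj; rewrite [RHS]lift_max.
  by rewrite !ffun_snoc_lift.
have -> : widen_ord (leqnSn m.+1) ord_max = lift ord_max (ord_max : 'I_m.+1).
  by apply: val_inj; rewrite [RHS]lift_max.
have -> : lift ord0 (ord_max : 'I_m.+1) = ord_max by apply: val_inj.
by rewrite ffun_snoc_lift ffun_snoc_max.
Qed.

Lemma mxpow_path_sum (R : comPzSemiRingType) N (M : 'M[R]_N) m x y :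
  (M ^+ m) x y = \sum_(f : {ffun 'I_m.+1 -> 'I_N} | (f ord0 == x) && (f ord_max == y))
                   path_prod M f.
Proof.
elim: m y => [|m IH] y.
  rewrite big_mkcond sum_ffun_snoc /= expr0 mxE.
  have -> : (ord0 : 'I_1) = ord_max by apply: val_inj.
  under eq_bigr do under eq_bigr do rewrite ffun_snoc_max /path_prod big_ord0.
  rewrite sumr_const card_ffun !card_ord expn0 mulr1n -big_mkcond /=.
  case: eqP => [->|/eqP x_neq_y].
    by rewrite (eq_bigl (pred1 y)) ?big_pred1_eq // => z; rewrite andbb.
  by rewrite big_pred0 // => z; apply: contraNF x_neq_y => /andP[/eqP-> /eqP->].
rewrite exprSr mxE [RHS]big_mkcond sum_ffun_snoc /=.
have -> : (ord0 : 'I_m.+2) = lift ord_max ord0 by apply: val_inj.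
under [RHS]eq_bigr do under eq_bigr do rewrite ffun_snoc_lift ffun_snoc_max path_prod_snoc.
under eq_bigr do rewrite IH mulr_suml.
rewrite (exchange_big_dep predT) //=.
apply: eq_bigr => g _; case: (g ord0 == x) => /=; last by rewrite !big1.
by rewrite -big_mkcond big_pred1_eq (eq_bigl (pred1 (g ord_max))) ?big_pred1_eq.
Qed.

Lemma prodr_if_forall (R : comPzSemiRingType) (I : finType) (b : pred I) (F : I -> R) :
  \prod_i (if b i then F i else 0) = if [forall i, b i] then \prod_i F i else 0.
Proof.
case: (boolP [forall i, b i]) => [/forallP b_all | /forallPn[i /negbTE b_i]].
  by apply: eq_bigr => i _; rewrite b_all.
by rewrite (bigD1 i) //= b_i mul0r.
Qed.

Lemma only_last_eqE (T : eqType) m (f : {ffun 'I_m.+1 -> T}) (j : T) :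
  [forall k : 'I_m.+1, (f k == j) ==> (k == ord_max)] =
  [forall k : 'I_m, f (widen_ord (leqnSn m) k) != j].
Proof.
apply/forallP/forallP => f_j k.
  apply/eqP => fk_j; have := f_j (widen_ord (leqnSn m) k).
  rewrite fk_j eqxx /= => /eqP/(congr1 val) /= k_eq.
  by move: (ltn_ord k); rewrite k_eq ltnn.
apply/implyP => /eqP; case: (unliftP ord_max k) => [k' ->|-> //].
have -> : lift ord_max k' = widen_ord (leqnSn m) k'.
  by apply: val_inj; rewrite [LHS]lift_max.
by move=> fk_j; have := f_j k'; rewrite fk_j eqxx.
Qed.

Section ZeroRowPowers.
Variables (R : pzSemiRingType) (n : nat) (M : 'M[R]_n.+1) (j : 'I_n.+1).
Hypothesis row_j_eq0 : forall y, M j y = 0.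

Lemma mxpowSE_zero_row m x y :
  (M ^+ m.+1) x y = \sum_(z < n) (M ^+ m) x (lift j z) * M (lift j z) y.
Proof. by rewrite exprSr mxE (bigD1_ord j) //= row_j_eq0 mulr0 add0r. Qed.

Lemma row'_col'_mxpow m : row' j (col' j (M ^+ m)) = row' j (col' j M) ^+ m.
Proof.
elim: m => [|m IH]; apply/matrixP => k k'.
  by rewrite !expr0 !mxE (inj_eq (@lift_inj _ j)).
by rewrite [in RHS]exprSr !mxE mxpowSE_zero_row; apply: eq_bigr => z _; rewrite -IH !mxE.
Qed.

Lemma row'_col_mxpowS m :
  row' j (col j (M ^+ m.+1)) = row' j (col' j M) ^+ m *m row' j (col j M).
Proof.
apply/matrixP => k l; rewrite !mxE mxpowSE_zero_row.
by apply: eq_bigr => z _; rewrite -row'_col'_mxpow !mxE.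
Qed.

End ZeroRowPowers.

Section HittingWalks.
Variables (R : realType) (N : nat) (E : finType).
Variables (ends : E -> 'I_N * 'I_N) (w : E -> R).

Local Notation A := (adjmx R N E ends w).

Lemma sum_edge_choices (t : R) m (a b : 'I_m -> 'I_N) :
  \sum_(g : {ffun 'I_m -> E} | [forall k, joins N E ends (g k) (a k) (b k)])
     \prod_(k < m) (t * w (g k))
  = \prod_(k < m) (t * A (a k) (b k)).
Proof.
under [RHS]eq_bigr do rewrite mxE mulr_sumr big_mkcond.
rewrite bigA_distr_bigA /= big_mkcond; apply: eq_bigr => g _.
by rewrite prodr_if_forall.
Qed.

Definition absorbing_adjmx (t : R) (j : 'I_N) : 'M[R]_N :=
  \matrix_(x, y) if x == j then 0 else t * A x y.

Lemma sum_hitting_walk_weight (t : R) (i j : 'I_N) m :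
  \sum_(p : {ffun 'I_m.+1 -> 'I_N} * {ffun 'I_m -> E} |
         hitting_walk N E ends i j (existT _ m p))
     walk_weight R N E w t (existT _ m p)
  = (absorbing_adjmx t j ^+ m) i j.
Proof.
pose on_path (f : {ffun 'I_m.+1 -> 'I_N}) :=
  [&& f ord0 == i, f ord_max == j & [forall k : 'I_m.+1, (f k == j) ==> (k == ord_max)]].
pose follows f (g : {ffun 'I_m -> E}) :=
  [forall k, joins N E ends (g k) (f (widen_ord (leqnSn m) k)) (f (lift ord0 k))].
rewrite (eq_bigl (fun p => on_path p.1 && follows p.1 p.2)); last first.
  by move=> p; rewrite /hitting_walk andbC -!andbA.
rewrite -(pair_big_dep on_path follows (fun _ g => \prod_(k < m) (t * w (g k)))) /=.
rewrite mxpow_path_sum big_mkcond [RHS]big_mkcond; apply: eq_bigr => f _.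
rewrite /on_path; case: (f ord0 == i) => //=; case: (f ord_max == j) => //=.
rewrite sum_edge_choices /path_prod only_last_eqE -prodr_if_forall.
by apply: eq_bigr => k _; rewrite [RHS]mxE if_neg.
Qed.

End HittingWalks.

Lemma absorbing_adjmx_powS (R : realType) n (E : finType) (ends : E -> 'I_n.+1 * 'I_n.+1)
    (w : E -> R) (t : R) (j : 'I_n.+1) m :
  let A := adjmx R n.+1 E ends w in
  row' j (col j (absorbing_adjmx ends w t j ^+ m.+1))
  = (t *: row' j (col' j A)) ^+ m *m (t *: row' j (col j A)).
Proof.
move=> A; have row_j_eq0 y : absorbing_adjmx ends w t j j y = 0 by rewrite mxE eqxx.
rewrite row'_col_mxpowS //; congr (_ ^+ _ *m _); apply/matrixP => k l;
  by rewrite !mxE eq_sym (negbTE (neq_lift _ _)).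
Qed.

Section ExtendedSums.
Local Open Scope classical_set_scope.

Lemma esum_finType (R : realType) (T : finType) (P : pred T) (f : T -> R) :
  (forall x, 0 <= f x) ->
  (\esum_(x in [set x | P x]) (f x)%:E = (\sum_(x | P x) f x)%:E)%E.
Proof.
move=> f_ge0; rewrite esum_fset; last 2 first.
- exact: finite_finset.
- by move=> x _; rewrite lee_fin.
have -> : [set x | P x] = [set` [seq x <- enum T | P x]].
  by apply/seteqP; split => x /=; rewrite mem_filter mem_enum andbT.
rewrite -fsbig_seq; last exact/filter_uniq/enum_uniq.
rewrite big_filter big_enum_cond sumEFin.
by congr (_%:E); apply: eq_bigl.
Qed.

Lemma hitting_total_series (R : realType) N (E : finType) (ends : E -> 'I_N * 'I_N)
    (w : E -> R) (i j : 'I_N) (t : R) :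
  0 <= t -> (forall e, 0 <= w e) ->
  hitting_total R N E ends w i j t
  = (\sum_(0 <= m <oo) ((absorbing_adjmx ends w t j ^+ m) i j)%:E)%E.
Proof.
move=> t_ge0 w_ge0.
have weight_ge0 p : 0 <= walk_weight R N E w t p.
  by apply: prodr_ge0 => k _; rewrite mulr_ge0.
pose walks_of_length m : set (walk_t N E) :=
  [set existT _ m p | p in [set p | hitting_walk N E ends i j (existT _ m p)]].
have walks_by_length : [set p | hitting_walk N E ends i j p]
                       = \bigcup_(m in setT) walks_of_length m.
  apply/seteqP; split => [[m p] /= p_hit | _ [m _ [p p_hit <-]] //].
  by exists m => //; exists p.
rewrite /hitting_total walks_by_length esum_bigcupT; last 2 first.
- move=> m1 m2 _ _ [_ [[p1 _ <-] [p2 _ /(congr1 tag)]]] //.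
- by move=> p; rewrite lee_fin.
rewrite -nneseries_esumT; last by move=> m; apply: esum_ge0 => p _; rewrite lee_fin.
apply: eq_eseriesr => m _.
rewrite esum_image; last first.
  by move=> p1 p2 _ _ /= /(congr1 (tagged_as (existT _ m p1))); rewrite !tagged_asE.
by rewrite esum_finType ?sum_hitting_walk_weight.
Qed.

End ExtendedSums.

Lemma neumann_partial_sum (R : fieldType) n (A : 'M[R]_n.+1) (t : R) M :
  t != 0 -> t^-1%:M - A \in unitmx ->
  t *: \sum_(l < M) (t *: A) ^+ l = invmx (t^-1%:M - A) *m (1 - (t *: A) ^+ M).
Proof.
move=> t_neq0 unitB.
have -> : 1 - (t *: A) ^+ M = t *: (t^-1%:M - A) *m \sum_(l < M) (t *: A) ^+ l.
  by rewrite scalerBr scale_scalar_mx mulfV // -opprB subrX1 mulmxE -mulNr opprB.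
by rewrite -scalemxAl scalemxAr mulmxA mulVmx // mul1mx.
Qed.

Lemma cvg0_sum (R : realType) (I : finType) (u : I -> nat -> R) :
  (forall i, (u i m @[m --> \oo] --> 0)%classic) ->
  ((\sum_i u i m) @[m --> \oo] --> 0)%classic.
Proof.
move=> u_cvg0.
have := @cvg_big R^o I +%R 0 predT (@pseudometric_normed_Zmodule.add_continuous R R^o)
  nat \oo%classic (index_enum I) u (fun=> 0).
by rewrite big1 //; apply => // i _; exact: u_cvg0.
Qed.

Lemma cvg0_mulmx (R : realType) p q r s (Y : 'M[R]_(p, q)) (B : nat -> 'M[R]_(q, r))
    (C : 'M[R]_(r, s)) :
  (forall x y, (B m x y @[m --> \oo] --> 0)%classic) ->
  forall x y, ((Y *m B m *m C) x y @[m --> \oo] --> 0)%classic.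
Proof.
move=> B_cvg0 x y; under eq_fun do rewrite mxE.
apply: cvg0_sum => z; under eq_fun do rewrite mxE mulr_suml.
apply: cvg0_sum => u.
have := cvgMr_tmp (b := C z y) (cvgMl_tmp (a := Y x u) (B_cvg0 u z)).
by rewrite mulr0 mul0r; apply.
Qed.

Lemma cvg_neumann_series (R : realType) n (A : 'M[R]_n.+1) (a : 'cV[R]_n.+1) (t : R) k :
  0 < t -> t * spectral_radius R n.+1 A < 1 ->
  ((\sum_(l < M) ((t *: A) ^+ l *m (t *: a)) k 0) @[M --> \oo]
     --> (invmx (t^-1%:M - A) *m a) k 0)%classic.
Proof.
move=> t_gt0 t_rho.
have unitB : t^-1%:M - A \in unitmx by exact: unitmx_resolvent.
set Y := invmx _.
have -> : (fun M => \sum_(l < M) ((t *: A) ^+ l *m (t *: a)) k 0)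
          = (fun M => (Y *m a) k 0 - (Y *m (t ^+ M *: A ^+ M) *m a) k 0).
  apply: funext => M; rewrite -summxE -mulmx_suml -scalemxAr scalemxAl.
  rewrite neumann_partial_sum ?gt_eqF // exprZn mulmxBr mulmx1 mulmxBl mxE.
  by rewrite [in X in _ + X]mxE.
rewrite -[X in (_ --> X)%classic]subr0; apply: cvgB; first exact: cvg_cst.
apply: cvg0_mulmx => x y; under eq_fun do rewrite mxE.
exact: cvg0_scaled_mxpow.
Qed.

Lemma eseries_EFin (R : realType) (u : nat -> R) (l : R) :
  ((\sum_(m < M) u m) @[M --> \oo] --> l)%classic ->
  (\sum_(0 <= m <oo) (u m)%:E)%E = l%:E.
Proof.
move=> u_cvg; apply: cvg_lim => //.
under eq_fun do rewrite sumEFin big_mkord.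
by apply: cvg_EFin u_cvg; apply: nearW.
Qed.

Theorem lemma6 (R : realType) (n : nat) (E : finType)
    (ends : E -> 'I_n.+1 * 'I_n.+1) (w : E -> R)
    (hV : (1 <= n)%N)
    (hw : forall e : E, 0 < w e)
    (hconn : connected_graph n.+1 E ends)
    (i j : 'I_n.+1) (hij : i != j)
    (t : R) (ht0 : 0 < t)
    (ht : t * spectral_radius R n (row' j (col' j (adjmx R n.+1 E ends w))) < 1) :
  forall k : 'I_n, lift j k = i ->
    hitting_total R n.+1 E ends w i j t
    = ((invmx (t^-1%:M - row' j (col' j (adjmx R n.+1 E ends w)))
         *m row' j (col j (adjmx R n.+1 E ends w))) k 0)%:E.
Proof.
case: n hV => // n _ in ends hconn i j hij ht *.
move=> k i_def.
set A := adjmx R n.+2 E ends w in ht *.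
rewrite hitting_total_series ?(ltW ht0) // => [|e]; last exact: ltW.
apply: eseries_EFin; rewrite -cvg_shiftS /=.
apply: cvg_trans (cvg_neumann_series ht0 ht).
apply/near_eq_cvg/nearW => M /=.
rewrite big_ord_recl expr0 mxE (negbTE hij) add0r; apply: eq_bigr => l _.
by rewrite -absorbing_adjmx_powS !mxE i_def.
Qed.
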